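(* Let $Q$ be an indefinite ternary quadratic form with $\det Q=1$. There is a constant $c>0$ depending only on $Q$ such that the following holds. Let $L\subset\mathbb{R}^3$ be a plane and let $\mathbf{m}_1,\mathbf{m}_2,\mathbf{m}_3\in\mathbb{Z}^3\cap L$ be such that no two of them lie on a common line through the origin. If $0\le\epsilon<1$, $R>1$, $|Q(\mathbf{m}_i)|\le\epsilon$ and $R<\|\mathbf{m}_i\|<R^2$ for all $1\le i\le 3$, then $\epsilon\ge cR^{-64}$.
   Context: $\|\cdot\|$ is the supremum norm on $\mathbb{R}^3$. *)

From HB Require Import structures.
From mathcomp Require Import all_boot all_order all_algebra.
From mathcomp Require Import reals.
Set Implicit Arguments. Unset Strict Implicit. Unset Printing Implicit Defensive.
Import Order.TTheory GRing.Theory Num.Theory.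
Local Open Scope ring_scope.

Definition qform (R : realType) (A : 'M[R]_3) (x : 'rV[R]_3) : R :=
  (x *m A *m x^T) 0 0.

Definition is_symmetric (R : realType) (A : 'M[R]_3) : Prop := A^T = A.

Definition indefinite (R : realType) (A : 'M[R]_3) : Prop :=
  (exists x, 0 < qform A x) /\ (exists y, qform A y < 0).

Definition supnorm (R : realType) (x : 'rV[R]_3) : R :=
  \big[Num.max/0]_(i < 3) `|x 0 i|.

Definition zvec (R : realType) (m : 'rV[int]_3) : 'rV[R]_3 :=
  map_mx (fun z : int => z%:~R) m.

Definition is_plane (R : realType) (L : {vspace 'rV[R]_3}) : Prop :=
  \dim L = 2%N.

Definition is_line (R : realType) (l : {vspace 'rV[R]_3}) : Prop :=
  \dim l = 1%N.

Definition not_on_common_line (R : realType) (a b : 'rV[R]_3) : Prop :=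
  forall l : {vspace 'rV[R]_3}, is_line l -> ~ (a \in l /\ b \in l).

(* Let a, b, d be the three integral vectors, with coordinates at most s = R^2, and let
   n = a x b, a nonzero integral normal of the plane.  As d lies in the plane, Cramer's rule in
   the basis (a, b, n) gives (n.n) d = p a + q b with p, q nonzero integers of size O(s^4);
   expanding Q along this relation bounds the polar form B(a, b) by O(s^8 eps).  The Gram
   matrix of Q in the basis (a, b, n) has determinant (n.n)^2 det Q >= 1, while its upper left
   2x2 block (Q(a), B(a, b), Q(b)) is O(s^8 eps) and its other entries are O(s^4).  Expanding
   the determinant gives 1 <= O(s^16 eps) = O(R^32 eps), even better than R^-64. *)

From HB Require Import structures.
From mathcomp Require Import all_boot all_order all_algebra.
From mathcomp Require Import perm reals ring lra zify.
Import Order.TTheory GRing.Theory Num.Theory.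
Set Implicit Arguments. Unset Strict Implicit. Unset Printing Implicit Defensive.
Local Open Scope ring_scope.

Lemma ord3P (j : 'I_3) : [\/ j = 0, j = 1 | j = 2].
Proof.
by case: j => -[|[|[|//]]] ?; [constructor 1 | constructor 2 | constructor 3]; apply: val_inj.
Qed.

Lemma row3P (T : Type) (u v : 'rV[T]_3) :
  u 0 0 = v 0 0 -> u 0 1 = v 0 1 -> u 0 2 = v 0 2 -> u = v.
Proof. by move=> u0 u1 u2; apply/rowP => j; case: (ord3P j) => ->. Qed.

Section CrossProduct.
Variable R : comPzRingType.
Implicit Types u v w x : 'rV[R]_3.

Definition dotmul u v : R := u 0 0 * v 0 0 + u 0 1 * v 0 1 + u 0 2 * v 0 2.

Definition crossmul u v : 'rV[R]_3 :=
  \row_j [:: u 0 1 * v 0 2 - u 0 2 * v 0 1;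
             u 0 2 * v 0 0 - u 0 0 * v 0 2;
             u 0 0 * v 0 1 - u 0 1 * v 0 0]`_j.

Definition triple u v w : R := dotmul u (crossmul v w).

Lemma triple_crossmul u v : triple u v (crossmul u v) = dotmul (crossmul u v) (crossmul u v).
Proof. by rewrite /triple /dotmul !mxE /=; ring. Qed.

Lemma crossmul_crossmul u v : crossmul u (crossmul u v) = dotmul u v *: u - dotmul u u *: v.
Proof. by apply: row3P; rewrite !mxE /= /dotmul; ring. Qed.

Lemma cramer3 u v w x :
  triple u v w *: x = triple x v w *: u + triple u x w *: v + triple u v x *: w.
Proof. by apply: row3P; rewrite !mxE /= /triple /dotmul !mxE /=; ring. Qed.

End CrossProduct.

Section CrossProductBounds.
Variable R : realDomainType.
Implicit Types u v : 'rV[R]_3.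

Lemma dotmul_self_eq0 u : (dotmul u u == 0) = (u == 0).
Proof.
apply/idP/eqP => [|->]; last by rewrite /dotmul !mxE !mul0r !addr0.
rewrite /dotmul => /eqP uu0; apply: row3P; rewrite mxE; nra.
Qed.

Lemma dotmul_bound u v X Y :
  (forall j, `|u 0 j| <= X) -> (forall j, `|v 0 j| <= Y) -> `|dotmul u v| <= 3 * (X * Y).
Proof.
move=> uX vY; have uv j : `|u 0 j * v 0 j| <= X * Y by rewrite normrM ler_pM.
have := uv 0; have := uv 1; have := uv 2.
have := ler_normD (u 0 0 * v 0 0 + u 0 1 * v 0 1) (u 0 2 * v 0 2).
have := ler_normD (u 0 0 * v 0 0) (u 0 1 * v 0 1).
rewrite /dotmul; lra.
Qed.

Lemma crossmul_bound u v X Y :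
  (forall j, `|u 0 j| <= X) -> (forall j, `|v 0 j| <= Y) ->
  forall j, `|crossmul u v 0 j| <= 2 * (X * Y).
Proof.
move=> uX vY; have uv i j : `|u 0 i * v 0 j| <= X * Y by rewrite normrM ler_pM.
have minus i j k l : `|u 0 i * v 0 j - u 0 k * v 0 l| <= 2 * (X * Y).
  by have := ler_normB (u 0 i * v 0 j) (u 0 k * v 0 l); have := uv i j; have := uv k l; lra.
by move=> j; rewrite mxE; case: (ord3P j) => -> /=; apply: minus.
Qed.

End CrossProductBounds.

Section IntegralCrossProduct.
Variable R : archiNumDomainType.
Implicit Types u v : 'rV[R]_3.

Lemma dotmul_int u v : (forall j, u 0 j \is a Num.int) -> (forall j, v 0 j \is a Num.int) ->
  dotmul u v \is a Num.int.
Proof. by move=> uZ vZ; rewrite /dotmul !rpredD ?rpredM. Qed.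

Lemma crossmul_int u v : (forall j, u 0 j \is a Num.int) -> (forall j, v 0 j \is a Num.int) ->
  forall j, crossmul u v 0 j \is a Num.int.
Proof. by move=> uZ vZ j; rewrite mxE; case: (ord3P j) => -> /=; rewrite rpredB ?rpredM. Qed.

End IntegralCrossProduct.

Section LinesAndPlanes.
Variable R : realType.
Implicit Types (a b c : 'rV[R]_3) (L : {vspace 'rV[R]_3}).

Lemma vline_is_line a : a != 0 -> is_line <[a]>%VS.
Proof. by rewrite /is_line dim_vline => ->. Qed.

Lemma exists_line_memv a : exists2 l, is_line l & a \in l.
Proof.
have [a0|a_neq0] := eqVneq a 0; last first.
  by exists <[a]>%VS; [apply: vline_is_line | apply: memv_line].
have e_neq0 : const_mx 1 != 0 :> 'rV[R]_3.
  by apply/eqP => /rowP/(_ 0)/eqP; rewrite !mxE oner_eq0.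
by exists <[const_mx 1]>%VS; [apply: vline_is_line | rewrite a0 mem0v].
Qed.

Lemma not_on_common_line_neq0 a b : not_on_common_line a b -> a != 0.
Proof.
move=> ab; apply/eqP => a0; have [l l_line bl] := exists_line_memv b.
by apply: (ab l l_line); rewrite a0 mem0v.
Qed.

Lemma not_on_common_line_vline a b : not_on_common_line a b -> b \notin <[a]>%VS.
Proof.
move=> ab; apply/negP => ba.
by apply: (ab <[a]>%VS); [exact: vline_is_line (not_on_common_line_neq0 ab) | rewrite memv_line].
Qed.

Lemma crossmul_neq0 a b : not_on_common_line a b -> crossmul a b != 0.
Proof.
move=> ab; apply: contraNneq (not_on_common_line_vline ab) => ab0.
have aa_neq0 : dotmul a a != 0 by rewrite dotmul_self_eq0 (not_on_common_line_neq0 ab).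
have crossmul_a0 : crossmul a 0 = 0 by apply: row3P; rewrite !mxE /= !mulr0 subrr.
have -> : b = (dotmul a a)^-1 *: (dotmul a b *: a).
  apply/(scalerI aa_neq0)/eqP; rewrite scalerA mulfV // scale1r eq_sym -subr_eq0.
  by rewrite -crossmul_crossmul ab0 crossmul_a0.
by rewrite !memvZ ?memv_line.
Qed.

Lemma plane_triple_eq0 L a b c :
  is_plane L -> a \in L -> b \in L -> c \in L -> triple a b c = 0.
Proof.
move=> L2 aL bL cL; have [//|abc_neq0] := eqVneq (triple a b c) 0.
suff /dimvS : (fullv <= L)%VS by rewrite dimvf L2.
apply/subvP => x _; rewrite -(scalerK abc_neq0 x) cramer3.
by rewrite memvZ // !memvD // memvZ.
Qed.

End LinesAndPlanes.

Section BilinearForm.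
Variables (R : comPzRingType) (n : nat) (A : 'M[R]_n).
Implicit Types x y : 'rV[R]_n.

Definition bform x y : R := (x *m A *m y^T) 0 0.

Lemma bformC x y : A^T = A -> bform x y = bform y x.
Proof.
move=> AT; transitivity ((x *m A *m y^T)^T 0 0); first by rewrite mxE.
by rewrite !trmx_mul trmxK AT mulmxA.
Qed.

Lemma bform_lincomb k l x y : A^T = A ->
  bform (k *: x + l *: y) (k *: x + l *: y)
  = k ^+ 2 * bform x x + 2 * k * l * bform x y + l ^+ 2 * bform y y.
Proof.
move=> AT; have := bformC x y AT; rewrite /bform linearD /= !linearZ /=.
rewrite !mulmxDl -!scalemxAl !mulmxDr -!scalemxAr.
move: (x *m A *m x^T) (x *m A *m y^T) (y *m A *m x^T) (y *m A *m y^T).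
move=> Bxx Bxy Byx Byy Bxy_yx.
by rewrite !mxE Bxy_yx; ring.
Qed.

Lemma gram_entry m (N : 'M[R]_(m, n)) i j :
  (N *m A *m N^T) i j = bform (row i N) (row j N).
Proof. by rewrite /bform -row_mul !mxE; apply: eq_bigr => k _; rewrite !mxE. Qed.

End BilinearForm.

Lemma bform_bound (R : realDomainType) n (A : 'M[R]_n) (x y : 'rV[R]_n) (X Y : R) :
  (forall i, `|x 0 i| <= X) -> (forall i, `|y 0 i| <= Y) ->
  `|bform A x y| <= X * Y * \sum_j \sum_i `|A i j|.
Proof.
move=> xX yY; rewrite /bform !mxE mulr_sumr; apply: le_trans (ler_norm_sum _ _ _) _.
apply: ler_sum => j _; rewrite !mxE big_distrl mulr_sumr /=.
apply: le_trans (ler_norm_sum _ _ _) _; apply: ler_sum => i _.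
by rewrite !normrM mulrC mulrA [X * _]mulrC ler_pM ?mulr_ge0 // ler_pM.
Qed.

Definition rows3 (R : Type) (u v w : 'rV[R]_3) : 'M[R]_3 := \matrix_i nth u [:: u; v; w] i.

Lemma det_mx33 (R : comPzRingType) (M : 'M[R]_3) : \det M =
  M 0 0 * (M 1 1 * M 2 2 - M 1 2 * M 2 1) - M 0 1 * (M 1 0 * M 2 2 - M 1 2 * M 2 0)
  + M 0 2 * (M 1 0 * M 2 1 - M 1 1 * M 2 0).
Proof.
have -> : M = \matrix_(i, j) M (inord i) (inord j).
  by apply/matrixP => i j; rewrite mxE !inord_val.
rewrite (expand_det_row _ 0) !big_ord_recr big_ord0 /= add0r /cofactor.
rewrite !(expand_det_row _ 0) !big_ord_recr !big_ord0 /= !add0r /cofactor !det_mx11 !mxE /=.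
ring.
Qed.

Lemma det_rows3 (R : comPzRingType) (u v w : 'rV[R]_3) : \det (rows3 u v w) = triple u v w.
Proof. by rewrite det_mx33 /triple /dotmul !mxE /=; ring. Qed.

Lemma det3_small_block (R : realDomainType) (G : 'M[R]_3) e M :
  (forall i j, `|G i j| <= M) ->
  (forall i j : 'I_3, (i < 2)%N -> (j < 2)%N -> `|G i j| <= e) ->
  `|\det G| <= 6 * e * M ^+ 2.
Proof.
move=> GM Ge; apply: le_trans (ler_norm_sum _ _ _) _.
rewrite -[6]/(3`!%:R) -card_Sn mulr_natl mulrnAl -sumr_const.
apply: ler_sum => s _; rewrite normrM normr_sign mul1r normr_prod.
have [i0 i0_lt si0_lt] : exists2 i0 : 'I_3, (i0 < 2)%N & (s i0 < 2)%N.
  have : s 0 != s 1 by rewrite (inj_eq perm_inj).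
  case: (ltnP (s 0) 2) => [|s0_ge]; first by exists 0.
  case: (ltnP (s 1) 2) => [|s1_ge]; first by exists 1.
  move: (ltn_ord (s 0)) (ltn_ord (s 1)) => s0_lt s1_lt.
  by rewrite -(inj_eq val_inj) /= eqn_leq; lia.
rewrite (bigD1 i0) //= ler_pM ?prodr_ge0 ?Ge //.
have -> : M ^+ 2 = \prod_(i < 3 | i != i0) M by rewrite prodr_const cardC1 card_ord.
by apply: ler_prod => i _; rewrite normr_ge0 GM.
Qed.

Lemma bform_small_of_decomposition (R : realFieldType) (A : 'M[R]_3) (a b d : 'rV[R]_3)
    (k p q C eps : R) :
  A^T = A -> k *: d = p *: a + q *: b -> 1 <= `|p * q| ->
  `|k| <= C -> `|p| <= C -> `|q| <= C ->
  `|bform A a a| <= eps -> `|bform A b b| <= eps -> `|bform A d d| <= eps ->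
  `|bform A a b| <= 3 / 2 * C ^+ 2 * eps.
Proof.
move=> A_sym dec pq_ge1 kC pC qC Qa Qb Qd.
have sq_bound x y : `|x| <= C -> `|y| <= eps -> `|x ^+ 2 * y| <= C ^+ 2 * eps.
  move=> xC yeps; rewrite normrM normrX ler_pM ?exprn_ge0 //.
  by rewrite lerXn2r ?nnegrE // (le_trans _ xC).
have Qkd : k ^+ 2 * bform A d d
            = p ^+ 2 * bform A a a + 2 * p * q * bform A a b + q ^+ 2 * bform A b b.
  by rewrite -bform_lincomb // -dec -[k *: d]addr0 -(scale0r d) bform_lincomb //; ring.
have pqB : `|2 * (p * q) * bform A a b| <= 3 * (C ^+ 2 * eps).
  have -> : 2 * (p * q) * bform A a b
            = k ^+ 2 * bform A d d - p ^+ 2 * bform A a a - q ^+ 2 * bform A b b.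
    by rewrite Qkd; ring.
  have := ler_normB (k ^+ 2 * bform A d d - p ^+ 2 * bform A a a) (q ^+ 2 * bform A b b).
  have := ler_normB (k ^+ 2 * bform A d d) (p ^+ 2 * bform A a a).
  have := sq_bound _ _ kC Qd; have := sq_bound _ _ pC Qa; have := sq_bound _ _ qC Qb.
  lra.
have : `|bform A a b| <= `|p * q| * `|bform A a b| by rewrite ler_peMl.
move: pqB; rewrite normrM [`|2 * _|]normrM ger0_norm //; lra.
Qed.

Lemma plane_int_decomposition (R : realType) (L : {vspace 'rV[R]_3}) (a b d : 'rV[R]_3)
    (s : R) :
  is_plane L -> a \in L -> b \in L -> d \in L ->
  not_on_common_line a b -> not_on_common_line a d -> not_on_common_line b d ->
  (forall j, a 0 j \is a Num.int) -> (forall j, b 0 j \is a Num.int) ->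
  (forall j, d 0 j \is a Num.int) ->
  (forall j, `|a 0 j| <= s) -> (forall j, `|b 0 j| <= s) -> (forall j, `|d 0 j| <= s) ->
  exists k p q : R, [/\ k *: d = p *: a + q *: b, 1 <= `|p * q|
                      & [/\ `|k| <= 12 * s ^+ 4, `|p| <= 12 * s ^+ 4 & `|q| <= 12 * s ^+ 4]].
Proof.
move=> L2 aL bL dL ab ad bd aZ bZ dZ aS bS dS; set n := crossmul a b.
exists (dotmul n n), (triple d b n), (triple a d n).
have dec : dotmul n n *: d = triple d b n *: a + triple a d n *: b.
  have := cramer3 a b n d.
  by rewrite triple_crossmul (plane_triple_eq0 L2 aL bL dL) scale0r addr0.
have nn_neq0 : dotmul n n != 0 by rewrite dotmul_self_eq0 crossmul_neq0.
have memv_dec x c : dotmul n n *: d = c *: x -> d \in <[x]>%VS.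
  by move=> dx; rewrite -(scalerK nn_neq0 d) dx !memvZ ?memv_line.
have p_neq0 : triple d b n != 0.
  apply: contraNneq (not_on_common_line_vline bd) => p0.
  by apply: (memv_dec _ (triple a d n)); rewrite dec p0 scale0r add0r.
have q_neq0 : triple a d n != 0.
  apply: contraNneq (not_on_common_line_vline ad) => q0.
  by apply: (memv_dec _ (triple d b n)); rewrite dec q0 scale0r addr0.
have nZ := crossmul_int aZ bZ; have nS := crossmul_bound aS bS.
have pq_int : triple d b n * triple a d n \is a Num.int.
  by apply: rpredM; apply: dotmul_int => //; apply: crossmul_int.
split; first exact: dec; first by rewrite norm_intr_ge1 ?mulf_neq0.
by split; [apply: le_trans (dotmul_bound nS nS) _
  | apply: le_trans (dotmul_bound dS (crossmul_bound bS nS)) _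
  | apply: le_trans (dotmul_bound aS (crossmul_bound dS nS)) _]; lra.
Qed.

Lemma qform_pair_lower_bound (R : realType) (A : 'M[R]_3) (a b : 'rV[R]_3) (s e : R) :
  A^T = A -> \det A = 1 -> not_on_common_line a b ->
  (forall j, a 0 j \is a Num.int) -> (forall j, b 0 j \is a Num.int) ->
  1 <= s -> (forall j, `|a 0 j| <= s) -> (forall j, `|b 0 j| <= s) ->
  `|bform A a a| <= e -> `|bform A b b| <= e -> `|bform A a b| <= e ->
  1 <= 96 * e * (s ^+ 4 * \sum_j \sum_i `|A i j|) ^+ 2.
Proof.
move=> A_sym detA ab aZ bZ s_ge1 aS bS Qa Qb Bab.
set n := crossmul a b; set N := rows3 a b n.
set M := 2 * (s * s) * (2 * (s * s)) * \sum_j \sum_i `|A i j|.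
have detG : \det (N *m A *m N^T) = dotmul n n ^+ 2.
  by rewrite !det_mulmx det_tr det_rows3 triple_crossmul detA mulr1 expr2.
have detG_ge1 : 1 <= `|\det (N *m A *m N^T)|.
  rewrite detG normrX exprn_ege1 // norm_intr_ge1 ?dotmul_self_eq0 ?crossmul_neq0 //.
  by apply: dotmul_int; apply: crossmul_int.
have N_bound i j : `|N i j| <= 2 * (s * s).
  have s_le : s <= 2 * (s * s) by nra.
  rewrite mxE; case: (ord3P i) => -> /=; last exact: crossmul_bound.
    exact: le_trans (aS j) s_le.
  exact: le_trans (bS j) s_le.
have G_bound i j : `|(N *m A *m N^T) i j| <= M.
  by rewrite gram_entry; apply: bform_bound => k; rewrite mxE.
have G_block (i j : 'I_3) : (i < 2)%N -> (j < 2)%N -> `|(N *m A *m N^T) i j| <= e.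
  rewrite gram_entry !rowK.
  by case: (ord3P i) (ord3P j) => -> [] -> //=; rewrite bformC.
have := det3_small_block G_bound G_block; rewrite /M; nra.
Qed.

Theorem lemma2p5 (R : realType) (A : 'M[R]_3) :
  is_symmetric A -> indefinite A -> \det A = 1 ->
  exists c : R, 0 < c /\
    forall (L : {vspace 'rV[R]_3}) (m : 'I_3 -> 'rV[int]_3) (eps r : R),
      is_plane L ->
      (forall i, zvec R (m i) \in L) ->
      (forall i j, i != j -> not_on_common_line (zvec R (m i)) (zvec R (m j))) ->
      0 <= eps -> eps < 1 -> 1 < r ->
      (forall i, `|qform A (zvec R (m i))| <= eps) ->
      (forall i, r < supnorm (zvec R (m i)) < r ^+ 2) ->
      c * r ^- 64 <= eps.
Proof.
move=> A_sym _ detA; set alpha := \sum_j \sum_i `|A i j|.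
have alpha_ge0 : 0 <= alpha by apply: sumr_ge0 => j _; apply: sumr_ge0.
have alpha1_gt0 : 0 < 1 + alpha by lra.
exists (20736 * (1 + alpha) ^+ 2)^-1; split; first by rewrite invr_gt0 mulr_gt0 ?exprn_gt0.
move=> L m eps r L2 mL m_ncl eps_ge0 _ r_gt1 Qm m_bound.
have mZ i j : zvec R (m i) 0 j \is a Num.int by rewrite mxE intr_int.
have mS i j : `|zvec R (m i) 0 j| <= r ^+ 2.
  case/andP: (m_bound i) => _ /ltW; apply: le_trans.
  exact: (le_bigmax 0 (fun j => `|zvec R (m i) 0 j|) j).
have [k [p [q [dec pq_ge1 [kS pS qS]]]]] := plane_int_decomposition L2 (mL 0) (mL 1) (mL 2)
  (m_ncl 0 1 isT) (m_ncl 0 2 isT) (m_ncl 1 2 isT) (mZ 0) (mZ 1) (mZ 2) (mS 0) (mS 1) (mS 2).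
have B01 := bform_small_of_decomposition A_sym dec pq_ge1 kS pS qS (Qm 0) (Qm 1) (Qm 2).
have r2_ge1 : 1 <= r ^+ 2 by rewrite exprn_ege1 //; lra.
have eps_le : eps <= 3 / 2 * (12 * (r ^+ 2) ^+ 4) ^+ 2 * eps.
  by rewrite ler_peMl //; have := exprn_ege1 4 r2_ge1; nra.
have := qform_pair_lower_bound A_sym detA (m_ncl 0 1 isT) (mZ 0) (mZ 1) r2_ge1 (mS 0) (mS 1)
  (le_trans (Qm 0) eps_le) (le_trans (Qm 1) eps_le) B01.
rewrite -/alpha -!exprM /= => h.
have r_gt0 : 0 < r by lra.
rewrite -invfM -[_^-1]div1r ler_pdivrMr ?mulr_gt0 ?exprn_gt0 //.
have : r ^+ 32 * alpha ^+ 2 <= r ^+ 64 * (1 + alpha) ^+ 2.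
  by rewrite ler_pM ?exprn_ge0 ?ler_eXn2l ?lerXn2r ?nnegrE //; lra.
nra.
Qed.
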